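(* There is a polynomial $p$ such that: (1) for every deterministic weak Muller automaton $\mathfrak{A}$ over $\Sigma_I\times\Sigma_O$ with $k$ states (acceptance family in any representation), Player $O$ wins $\Gamma_g(L(\mathfrak{A}))$ for some delay function $g$ if and only if Player $O$ wins $\Gamma_f(L(\mathfrak{A}))$ for some constant delay function $f$ with $f(0)\le 2^{2^{p(k)}}$; (2) for every non-deterministic weak Muller automaton $\mathfrak{A}$ over $\Sigma_I\times\Sigma_O$ with $k$ states, Player $O$ wins $\Gamma_g(L(\mathfrak{A}))$ for some delay function $g$ if and only if Player $O$ wins $\Gamma_f(L(\mathfrak{A}))$ for some constant delay function $f$ with $f(0)\le 2^{2^{2^{p(k)}}}$.
   Context: An $\omega$-automaton $\mathfrak{A}=(Q,\Sigma,q_I,\Delta,\mathrm{Acc})$ has finite state set $Q$, alphabet $\Sigma$, initial state $q_I$, transitions $\Delta\subseteq Q\times\Sigma\times Q$, accepting runs $\mathrm{Acc}\subseteq\Delta^\omega$; $L(\mathfrak{A})$ is the set of words processed by an initial accepting run. Deterministic means $\Delta$ is a total function $Q\times\Sigma\to Q$. A weak Muller automaton has $\mathcal{F}\subseteq 2^Q$ and accepts runs whose set of visited states lies in $\mathcal{F}$. A delay function is $f:\mathbb{N}\to\mathbb{N}_{\ge1}$; it is constant if $f(i)=1$ for all $i>0$. In the delay game $\Gamma_f(L)$, $L\subseteq(\Sigma_I\times\Sigma_O)^\omega$, in round $i=0,1,\dots$ Player $I$ picks $u_i\in\Sigma_I^{f(i)}$ and then Player $O$ picks $v_i\in\Sigma_O$;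 $O$ wins the play iff $\binom{u_0u_1\cdots}{v_0v_1\cdots}\in L$. Strategies: $\tau_I:\Sigma_O^*\to\Sigma_I^*$ with $|\tau_I(w)|=f(|w|)$, $\tau_O:\Sigma_I^+\to\Sigma_O$; a player wins the game if she/he has a strategy winning all consistent plays. *)

From mathcomp Require Import all_boot.
Set Implicit Arguments. Unset Strict Implicit. Unset Printing Implicit Defensive.

Definition polyn (cs : seq nat) (k : nat) : nat :=
  \sum_(i < size cs) nth 0 cs i * k ^ i.

Definition is_delay (f : nat -> nat) : Prop := forall i, 0 < f i.
Definition is_const_delay (f : nat -> nat) : Prop :=
  is_delay f /\ (forall i, 0 < i -> f i = 1).

Section Games.
Variables SI SO : Type.

(* Total number of input letters picked by Player I after rounds 0..i. *)
Definition lookahead (f : nat -> nat) (i : nat) : nat := \sum_(j < i.+1) f j.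

(* A play is determined by Player I's
   input word alpha = u_0 u_1 ... (u_i the block of length f i); in round i
   Player O answers tauO (u_0 ... u_i). *)
Definition winsO (f : nat -> nat) (L : (nat -> SI * SO) -> Prop) : Prop :=
  exists tauO : seq SI -> SO,
    forall alpha : nat -> SI,
      L (fun n => (alpha n, tauO (mkseq alpha (lookahead f n)))).
End Games.

Section Automata.
Variables (A : Type) (Q : finType).

Definition occ (r : nat -> Q) (q : Q) : Prop := exists n, r n = q.
Definition weak_muller_acc (F : {set {set Q}}) (r : nat -> Q) : Prop :=
  exists S, S \in F /\ forall q, q \in S <-> occ r q.

Definition det_run (q0 : Q) (delta : Q -> A -> Q) (w : nat -> A) : nat -> Q :=
  fix r n := match n with 0 => q0 | n'.+1 => delta (r n') (w n') end.
Definition dwm_lang (q0 : Q) (delta : Q -> A -> Q) (F : {set {set Q}})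
  (w : nat -> A) : Prop := weak_muller_acc F (det_run q0 delta w).

Definition nwm_lang (q0 : Q) (Delta : Q -> A -> Q -> bool) (F : {set {set Q}})
  (w : nat -> A) : Prop :=
  exists r : nat -> Q, r 0 = q0 /\ (forall n, Delta (r n) (w n) (r n.+1))
                       /\ weak_muller_acc F r.
End Automata.

(* The winning condition depends on a play only through the profiles of its blocks, for
   a compositional profile map into a finite type P: for a deterministic automaton the
   map sending each state to the state reached and the set of states visited, for a
   nondeterministic one the set of (source, target, visited set) triples of runs.  The
   profiles Player O can produce on an input word form its realizable set, and by
   pigeonhole every word longer than 2 ^ |P| has arbitrarily long words with the same
   realizable set.  Given a winning strategy for some delay, Player O cuts the input into
   blocks of length d = 2 ^ |P|, replaces each by an equivalent virtual block long enough
   to cover the strategy's lookahead, simulates the strategy on the virtual input and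
   answers on the real block with outputs of the same profile.  Answering on block j only
   needs blocks j and j + 1, so the constant delay 2 d suffices; counting P gives the
   bounds. *)

From mathcomp Require Import all_boot.
From mathcomp Require Import zify.
From Stdlib Require Import IndefiniteDescription.
Set Implicit Arguments. Unset Strict Implicit. Unset Printing Implicit Defensive.

Lemma card_finset (T : finType) : #|{set T}| = 2 ^ #|T|.
Proof. by rewrite -[LHS]cardsT -powersetT card_powerset cardsT. Qed.

Lemma eq_in_mkseq (T : Type) (f h : nat -> T) n :
  (forall i, i < n -> f i = h i) -> mkseq f n = mkseq h n.
Proof. by move=> fh; apply/eq_in_map => i; rewrite mem_iota => /fh. Qed.

Lemma mkseq_cons (T : Type) (f : nat -> T) n :
  mkseq f n.+1 = f 0 :: mkseq (fun i => f i.+1) n.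
Proof. by rewrite /mkseq /= (iotaDl 1 0) -map_comp. Qed.

Lemma mem_mkseqP (T : eqType) (f : nat -> T) n x :
  reflect (exists2 i, i < n & f i = x) (x \in mkseq f n).
Proof.
apply: (iffP mapP) => [[i]|[i lt_in <-]]; first by rewrite mem_iota => lt_in ->; exists i.
by exists i; rewrite // mem_iota.
Qed.

Lemma size_flatten_nseq (T : Type) (v : seq T) k : size (flatten (nseq k v)) = k * size v.
Proof. by elim: k => //= k IH; rewrite size_cat IH mulSn. Qed.

Definition segment (T : Type) (c : nat -> T) s e := mkseq (fun i => c (s + i)) (e - s).

Lemma size_segment (T : Type) (c : nat -> T) s e : size (segment c s e) = e - s.
Proof. exact: size_mkseq. Qed.

Lemma segment_cons (T : Type) (c : nat -> T) s e :
  s < e -> segment c s e = c s :: segment c s.+1 e.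
Proof.
move=> lt_se; rewrite /segment -(subnSK lt_se) mkseq_cons addn0; congr cons.
by apply/eq_mkseq => i; rewrite addSnnS.
Qed.

Lemma mem_segmentP (T : eqType) (c : nat -> T) s e x :
  reflect (exists2 i, s <= i < e & c i = x) (x \in segment c s e).
Proof.
apply: (iffP mapP) => [[i]|[i /andP[le_si lt_ie] <-]].
  rewrite mem_iota add0n /= => lt_i ->.
  by exists (s + i); rewrite // leq_addr -ltn_subRL.
exists (i - s); last by rewrite subnKC.
by rewrite mem_iota add0n ltn_sub2r // (leq_ltn_trans le_si).
Qed.

Lemma block_cover (B : nat -> nat) : B 0 = 0 -> (forall j, B j < B j.+1) ->
  forall n, exists j, B j <= n < B j.+1.
Proof.
move=> B0 B_lt n.
have B_ge j : j <= B j by elim: j => // j IH; apply: leq_ltn_trans IH (B_lt j).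
have ex_B : exists j, B j <= n by exists 0; rewrite B0.
have [j le_Bj_n j_max] := ex_maxnP ex_B (fun j le_Bj => leq_trans (B_ge j) le_Bj).
by exists j; rewrite le_Bj_n ltnNge; apply/negP => /j_max; rewrite ltnn.
Qed.

Lemma zip_mkseq_nth (S T : Type) (x0 : S) (y0 : T) (s : seq S) (t : seq T) :
  size s = size t -> zip s t = mkseq (fun i => (nth x0 s i, nth y0 t i)) (size s).
Proof.
move=> st; apply: (@eq_from_nth _ (x0, y0)); first by rewrite size_zip size_mkseq st minnn.
by move=> i; rewrite size_zip -st minnn => lt_is; rewrite nth_zip // nth_mkseq.
Qed.

Definition const_delay (k : nat) : nat -> nat := fun i => if i is 0 then k else 1.

Lemma const_delayP k : 0 < k -> is_const_delay (const_delay k).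
Proof. by move=> k_gt0; split; case. Qed.

Lemma lookahead_const k n : lookahead (const_delay k) n = k + n.
Proof.
rewrite /lookahead big_ord_recl /=; congr addn.
by rewrite (eq_bigr (fun _ => 1)) // sum1_card card_ord.
Qed.

Section Lookahead.
Variable g : nat -> nat.
Hypothesis g_delay : is_delay g.

Lemma lookaheadS n : lookahead g n.+1 = lookahead g n + g n.+1.
Proof. by rewrite /lookahead big_ord_recr. Qed.

Lemma ltn_lookahead n : n < lookahead g n.
Proof.
elim: n => [|n IH]; first by rewrite /lookahead big_ord1 g_delay.
by rewrite lookaheadS -addn1 leq_add.
Qed.

Lemma leq_lookahead m n : m <= n -> lookahead g m <= lookahead g n.
Proof.
move/subnK <-; elim: (n - m) => [//|k IH].
by rewrite addSn lookaheadS (leq_trans IH) // leq_addr.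
Qed.

End Lookahead.

Section Reduction.
Variables (SI SO P : finType) (prof : seq (SI * SO) -> P) (comb : P -> P -> P).
Hypothesis prof_cat : forall l1 l2, prof (l1 ++ l2) = comb (prof l1) (prof l2).

Definition realizable (x : seq SI) : {set P} :=
  [set p | [exists w : (size x).-tuple SO, prof (zip x w) == p]].

Lemma realizableP x p :
  reflect (exists w, size w = size x /\ prof (zip x w) = p) (p \in realizable x).
Proof.
rewrite inE; apply: (iffP existsP) => [[w /eqP <-]|[w [sw <-]]].
  by exists w; rewrite size_tuple.
have sw' : size w == size x by rewrite sw.
by exists (Tuple sw').
Qed.

Lemma realizable_cat x z p : p \in realizable (x ++ z) <->
  exists p1 p2, [/\ p1 \in realizable x, p2 \in realizable z & p = comb p1 p2].
Proof.
split=> [/realizableP[w [sw <-]]|[p1 [p2 [/realizableP[w1 [s1 <-]]]]]].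
  have le_xw : size x <= size w by rewrite sw size_cat leq_addr.
  exists (prof (zip x (take (size x) w))), (prof (zip z (drop (size x) w))); split.
  - by apply/realizableP; exists (take (size x) w); rewrite size_takel.
  - by apply/realizableP; exists (drop (size x) w); rewrite size_drop sw size_cat addKn.
  - by rewrite -prof_cat -zip_cat ?cat_take_drop // size_takel.
move=> /realizableP[w2 [s2 <-]] ->; apply/realizableP; exists (w1 ++ w2).
by rewrite !size_cat s1 s2 zip_cat ?s1 // prof_cat.
Qed.

Lemma eq_realizable_cat x y z :
  realizable x = realizable y -> realizable (x ++ z) = realizable (y ++ z).
Proof.
move=> xy; apply/setP => p; apply/idP/idP => /realizable_cat[p1 [p2 [h1 h2 ->]]];
by apply/realizable_cat; exists p1, p2; split; rewrite ?xy // -?xy.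
Qed.

Lemma realizable_pump u v k : realizable (u ++ v) = realizable u ->
  realizable (u ++ flatten (nseq k v)) = realizable u.
Proof.
move=> uv; elim: k => [|k IH] /=; first by rewrite cats0.
by rewrite catA (eq_realizable_cat _ uv).
Qed.

(* Two of the 2 ^ #|P| + 1 shortest prefixes of x have the same realizable set, so the
   factor between them can be repeated at will. *)
Lemma realizable_stretch x m : 2 ^ #|P| <= size x ->
  exists y, realizable y = realizable x /\ m <= size y.
Proof.
move=> long_x.
pose f (i : 'I_(2 ^ #|P|).+1) := realizable (take i x).
have /injectivePn[i [j ne_ij eq_fij]] : ~~ injectiveb f.
  by apply/injectiveP => /leq_card; rewrite card_ord card_finset ltnn.
wlog lt_ij : i j ne_ij eq_fij / i < j.
  move=> W; case: (ltngtP i j) => [|lt_ji|eq_ij]; first exact: W.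
    by apply: (W j i) => //; rewrite eq_sym.
  by move: ne_ij; rewrite -val_eqE /= eq_ij eqxx.
pose u := take i x; pose v := drop i (take j x); pose z := drop j x.
have le_jx : j <= size x by apply: leq_trans long_x; rewrite -ltnS.
have uv_eq : u ++ v = take j x by rewrite /u /v -{1}(take_takel x (ltnW lt_ij)) cat_take_drop.
have x_eq : x = u ++ v ++ z by rewrite catA uv_eq cat_take_drop.
have uv_u : realizable (u ++ v) = realizable u by rewrite uv_eq.
have v_gt0 : 0 < size v by rewrite size_drop size_takel // subn_gt0.
exists (u ++ flatten (nseq m v) ++ z); split.
  by rewrite catA (eq_realizable_cat _ (realizable_pump m uv_u)) x_eq catA
    (eq_realizable_cat _ uv_u).
rewrite !size_cat size_flatten_nseq (leq_trans _ (leq_addl _ _)) //.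
by rewrite (leq_trans _ (leq_addr _ _)) // leq_pmulr.
Qed.

Definition block_closed (L : (nat -> SI * SO) -> Prop) :=
  forall (a b : nat -> SI * SO) (B : nat -> nat) (d : nat),
    0 < d -> B 0 = 0 -> (forall j, B j < B j.+1) ->
    (forall j, prof (segment a (B j) (B j.+1)) = prof (segment b (j * d) (j.+1 * d))) ->
    L a -> L b.

Lemma block_closed_ext L a b : block_closed L -> a =1 b -> L a -> L b.
Proof.
move=> closedL ab; apply: (closedL _ _ id 1) => // j.
by rewrite !muln1 /segment /= subSnn /mkseq /= !addn0 ab.
Qed.

Section Construction.
Variables (g : nat -> nat) (tau : seq SI -> SO) (a0 : SI) (o0 : SO).
Hypothesis g_delay : is_delay g.
Let d := 2 ^ #|P|.
Let ell := lookahead g.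

Lemma d_gt0 : 0 < d. Proof. by rewrite expn_gt0. Qed.

Lemma stretch_ex x m : exists y,
  (realizable y == realizable x) && ((d <= size x) ==> (m <= size y)).
Proof.
have [long_x|_] := leqP d (size x).
  by have [y [ry le_my]] := realizable_stretch m long_x; exists y; rewrite ry eqxx le_my implybT.
by exists x; rewrite eqxx.
Qed.

Definition stretch x m := xchoose (stretch_ex x m).

Lemma stretch_spec x m : realizable (stretch x m) = realizable x /\
  (d <= size x -> m <= size (stretch x m)).
Proof. by have /andP[/eqP -> /implyP] := xchooseP (stretch_ex x m). Qed.

Lemma answer_ex x p : exists w : seq SO,
  (p \in realizable x) ==> (size w == size x) && (prof (zip x w) == p).
Proof.
case: (boolP (p \in realizable x)) => [/realizableP[w [sw pw]]|_]; last by exists [::].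
by exists w; rewrite sw pw !eqxx.
Qed.

Definition answer x p := xchoose (answer_ex x p).

Lemma answer_spec x p : p \in realizable x ->
  size (answer x p) = size x /\ prof (zip x (answer x p)) = p.
Proof. by move=> px; have /implyP/(_ px)/andP[/eqP -> /eqP ->] := xchooseP (answer_ex x p). Qed.

(* Input block j is replaced by a virtual block with the same realizable set that is at
   least as long as tau's lookahead at its start; tau's answers on it are transferred
   back to block j through a common profile. *)
Definition rblock (al : nat -> SI) j := mkseq (fun i => al (j * d + i)) d.

Fixpoint vstart al j :=
  if j is j'.+1 then vstart al j' + size (stretch (rblock al j') (ell (vstart al j'))) else 0.

Definition vblock al j := stretch (rblock al j) (ell (vstart al j)).

(* n.+1 virtual blocks suffice since vstart al n.+1 > n. *)
Definition vinput al n := nth a0 (flatten (mkseq (vblock al) n.+1)) n.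

Definition vanswer al j :=
  mkseq (fun k => tau (mkseq (vinput al) (ell (vstart al j + k)))) (size (vblock al j)).

Definition ranswer al j := answer (rblock al j) (prof (zip (vblock al j) (vanswer al j))).

Definition tau_const al n := nth o0 (ranswer al (n %/ d)) (n %% d).

Lemma size_vblock al j : ell (vstart al j) <= size (vblock al j).
Proof. by have [_] := stretch_spec (rblock al j) (ell (vstart al j)); apply; rewrite size_mkseq. Qed.

Lemma realizable_vblock al j : realizable (vblock al j) = realizable (rblock al j).
Proof. by have [] := stretch_spec (rblock al j) (ell (vstart al j)). Qed.

Lemma vstartS al j : vstart al j.+1 = vstart al j + size (vblock al j).
Proof. by []. Qed.

Lemma vstart_lt al j : vstart al j < vstart al j.+1.
Proof.
rewrite vstartS -{1}(addn0 (vstart al j)) ltn_add2l.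
exact: leq_ltn_trans (leq0n _) (leq_trans (ltn_lookahead g_delay _) (size_vblock al j)).
Qed.

Lemma vstart_ge al j : j <= vstart al j.
Proof. by elim: j => // j IH; apply: leq_ltn_trans IH (vstart_lt al j). Qed.

Lemma size_flatten_vblock al K : size (flatten (mkseq (vblock al) K)) = vstart al K.
Proof. by elim: K => // K IH; rewrite mkseqS flatten_rcons size_cat IH. Qed.

Lemma flatten_vblock_prefix al K k : exists s,
  flatten (mkseq (vblock al) (K + k)) = flatten (mkseq (vblock al) K) ++ s.
Proof.
elim: k => [|k [s IH]]; first by exists [::]; rewrite addn0 cats0.
by exists (s ++ vblock al (K + k)); rewrite addnS mkseqS flatten_rcons IH catA.
Qed.

Lemma vinputE al K n : n < vstart al K ->
  vinput al n = nth a0 (flatten (mkseq (vblock al) K)) n.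
Proof.
have nth_flatten K1 K2 : K1 <= K2 -> n < vstart al K1 ->
    nth a0 (flatten (mkseq (vblock al) K1)) n = nth a0 (flatten (mkseq (vblock al) K2)) n.
  move=> le_K12 lt_n; rewrite -(subnKC le_K12).
  have [s ->] := flatten_vblock_prefix al K1 (K2 - K1).
  by rewrite nth_cat size_flatten_vblock lt_n.
have lt_n1 : n < vstart al n.+1 by apply: leq_trans (vstart_ge al n.+1).
move=> lt_nK; rewrite /vinput.
by case: (leqP K n.+1) => [|/ltnW] le_K; rewrite (nth_flatten _ _ le_K).
Qed.

Lemma vinput_vblock al j i : i < size (vblock al j) ->
  vinput al (vstart al j + i) = nth a0 (vblock al j) i.
Proof.
move=> lt_i; rewrite (@vinputE _ j.+1); last by rewrite vstartS ltn_add2l.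
by rewrite mkseqS flatten_rcons nth_cat size_flatten_vblock ltnNge leq_addr /= addKn.
Qed.

Lemma vplay_segment al j :
  segment (fun n => (vinput al n, tau (mkseq (vinput al) (ell n)))) (vstart al j) (vstart al j.+1)
  = zip (vblock al j) (vanswer al j).
Proof.
rewrite (zip_mkseq_nth a0 o0) ?size_mkseq // /segment vstartS addKn.
by apply: eq_in_mkseq => i lt_i; rewrite vinput_vblock // /vanswer nth_mkseq.
Qed.

Lemma ranswer_spec al j : size (ranswer al j) = d /\
  prof (zip (rblock al j) (ranswer al j)) = prof (zip (vblock al j) (vanswer al j)).
Proof.
have vp : prof (zip (vblock al j) (vanswer al j)) \in realizable (rblock al j).
  by rewrite -realizable_vblock; apply/realizableP; exists (vanswer al j); rewrite size_mkseq.
by have [-> ->] := answer_spec vp; rewrite size_mkseq.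
Qed.

Lemma play_segment al j :
  segment (fun n => (al n, tau_const al n)) (j * d) (j.+1 * d) = zip (rblock al j) (ranswer al j).
Proof.
have [size_r _] := ranswer_spec al j.
rewrite (zip_mkseq_nth a0 o0) ?size_r ?size_mkseq // /segment mulSn addnK.
apply: eq_in_mkseq => i lt_id; rewrite /tau_const /rblock nth_mkseq //.
by rewrite divnMDl ?d_gt0 // divn_small // addn0 modnMDl modn_small.
Qed.

Lemma tau_const_wins L : block_closed L ->
  (forall al, L (fun n => (al n, tau (mkseq al (ell n))))) ->
  forall al, L (fun n => (al n, tau_const al n)).
Proof.
move=> closedL tau_wins al.
apply: (closedL _ _ _ _ d_gt0 _ (vstart_lt al) _ (tau_wins (vinput al))) => // j.
by rewrite vplay_segment play_segment; have [_ ->] := ranswer_spec al j.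
Qed.

Section Prefix.
Variables (al1 al2 : nat -> SI) (K : nat).
Hypothesis agree : forall i, i < K * d -> al1 i = al2 i.

Lemma rblock_prefix j : j < K -> rblock al1 j = rblock al2 j.
Proof.
move=> lt_jK; apply: eq_in_mkseq => i lt_id; apply: agree.
apply: leq_trans (_ : j.+1 * d <= K * d); last by rewrite leq_mul2r lt_jK orbT.
by rewrite mulSn [d + _]addnC ltn_add2l.
Qed.

Lemma vstart_prefix j : j <= K -> vstart al1 j = vstart al2 j.
Proof. by elim: j => [//|j IH] lt_jK /=; rewrite IH ?(ltnW lt_jK) // rblock_prefix. Qed.

Lemma vblock_prefix j : j < K -> vblock al1 j = vblock al2 j.
Proof. by move=> lt_jK; rewrite /vblock rblock_prefix // vstart_prefix // ltnW. Qed.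

Lemma vinput_prefix n : n < vstart al1 K -> vinput al1 n = vinput al2 n.
Proof.
move=> lt_n; rewrite (@vinputE _ K) // (@vinputE _ K) -?vstart_prefix //.
by congr nth; congr flatten; apply: eq_in_mkseq => i lt_iK; rewrite vblock_prefix.
Qed.

End Prefix.

(* The lookahead of tau on virtual block j does not reach beyond virtual block j + 1. *)
Lemma ranswer_prefix al1 al2 j : (forall i, i < j.+2 * d -> al1 i = al2 i) ->
  ranswer al1 j = ranswer al2 j.
Proof.
move=> agree.
have eq_vb : vblock al1 j = vblock al2 j by apply: vblock_prefix agree _ _.
have eq_vs : vstart al1 j = vstart al2 j by apply: vstart_prefix agree _ _; rewrite ltnW.
have eq_va : vanswer al1 j = vanswer al2 j.
  rewrite /vanswer eq_vb eq_vs; apply: eq_in_mkseq => k lt_k; congr tau.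
  apply: eq_in_mkseq => i lt_i; apply: (vinput_prefix agree).
  apply: (leq_trans lt_i); apply: (@leq_trans (ell (vstart al1 j.+1))).
    by apply: leq_lookahead; rewrite vstartS eq_vs eq_vb leq_add2l ltnW.
  by apply: (leq_trans (size_vblock al1 j.+1)); rewrite (vstartS al1 j.+1) leq_addl.
by rewrite /ranswer eq_va eq_vb (rblock_prefix agree).
Qed.

End Construction.

Theorem winsO_const_delay L : block_closed L ->
  (exists g, is_delay g /\ winsO g L) -> winsO (const_delay (2 ^ #|P|.+1)) L.
Proof.
move=> closedL [g [g_delay [tau tau_wins]]].
case: (pickP (predT : pred SI)) => [a0 _|SI_empty]; last first.
  by exists tau => al; have := SI_empty (al 0).
pose tau' (s : seq SI) := tau_const g tau a0 (tau [::]) (nth a0 s) (size s - 2 ^ #|P|.+1).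
exists tau' => al.
apply: (block_closed_ext closedL _ (tau_const_wins a0 (tau [::]) g_delay closedL tau_wins al)).
move=> n /=; rewrite lookahead_const /tau' size_mkseq addKn /tau_const.
congr (_, nth _ _ _); apply: (ranswer_prefix tau a0 g_delay) => i lt_i.
rewrite nth_mkseq //.
apply: (leq_trans lt_i); rewrite expnS !mulSn mul0n addn0 addnA leq_add2l.
exact: leq_divM.
Qed.

End Reduction.

Section Deterministic.
Variables (SI SO Q : finType) (q0 : Q) (delta : Q -> SI * SO -> Q) (F : {set {set Q}}).

Fixpoint dtrace q (l : seq (SI * SO)) : Q * {set Q} :=
  if l is a :: l' then ((dtrace (delta q a) l').1, q |: (dtrace (delta q a) l').2)
  else (q, set0).

Definition dprof l : {ffun Q -> Q * {set Q}} := [ffun q => dtrace q l].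

Definition dcomb (p1 p2 : {ffun Q -> Q * {set Q}}) : {ffun Q -> Q * {set Q}} :=
  [ffun q => ((p2 (p1 q).1).1, (p1 q).2 :|: (p2 (p1 q).1).2)].

Lemma dtrace_cat q l1 l2 : dtrace q (l1 ++ l2) =
  ((dtrace (dtrace q l1).1 l2).1, (dtrace q l1).2 :|: (dtrace (dtrace q l1).1 l2).2).
Proof.
elim: l1 q => [|a l1 IH] q /=; first by rewrite set0U -surjective_pairing.
by rewrite IH /= setUA.
Qed.

Lemma dprof_cat l1 l2 : dprof (l1 ++ l2) = dcomb (dprof l1) (dprof l2).
Proof. by apply/ffunP => q; rewrite !ffunE dtrace_cat. Qed.

Fixpoint dstates (p : nat -> {ffun Q -> Q * {set Q}}) j :=
  if j is j'.+1 then (p j' (dstates p j')).1 else q0.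

Definition dvisits (p : nat -> {ffun Q -> Q * {set Q}}) q :=
  exists j, q \in (p j (dstates p j)).2.

Lemma eq_dvisits p1 p2 q : p1 =1 p2 -> dvisits p1 q <-> dvisits p2 q.
Proof.
move=> p12; have eq_st j : dstates p1 j = dstates p2 j by elim: j => //= j ->; rewrite p12.
by split=> -[j]; exists j; rewrite ?eq_st ?p12 // -eq_st -p12.
Qed.

Section Run.
Variable c : nat -> SI * SO.
Let r := det_run q0 delta c.

Lemma dtrace_run s e : s <= e ->
  dtrace (r s) (segment c s e) = (r e, [set x in segment r s e]).
Proof.
move/subnK <-; move: (e - s) => n; elim: n s => [|n IH] s.
  by rewrite add0n /segment subnn; congr pair; apply/setP => x; rewrite !inE.
have lt_s : s < n.+1 + s by rewrite addSn ltnS leq_addl.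
rewrite (segment_cons c lt_s) (segment_cons r lt_s) addSnnS.
by rewrite [dtrace _ _]/= -[delta _ _]/(r s.+1) IH set_cons.
Qed.

Variable B : nat -> nat.
Hypotheses (B0 : B 0 = 0) (B_lt : forall j, B j < B j.+1).
Let blocks j := dprof (segment c (B j) (B j.+1)).

Lemma dstates_run j : dstates blocks j = r (B j).
Proof. by elim: j => [|j IH] /=; rewrite ?B0 // IH ffunE dtrace_run // ltnW. Qed.

Lemma dwm_lang_blocks : dwm_lang q0 delta F c <->
  exists S, S \in F /\ forall q, q \in S <-> dvisits blocks q.
Proof.
have occ_blocks q : occ r q <-> dvisits blocks q.
  rewrite /dvisits; split=> [[n <-]|[j]].
    have [j /andP[le_n lt_n]] := block_cover B0 B_lt n.
    exists j; rewrite dstates_run ffunE dtrace_run ?(ltnW (B_lt j)) // inE.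
    by apply/mem_segmentP; exists n; rewrite ?le_n.
  rewrite dstates_run ffunE dtrace_run ?(ltnW (B_lt j)) // inE.
  by case/mem_segmentP => n _ <-; exists n.
by split=> -[S [SF S_occ]]; exists S; split=> // q; rewrite S_occ occ_blocks.
Qed.

End Run.

Lemma dwm_block_closed : block_closed dprof (dwm_lang q0 delta F).
Proof.
move=> a b B d d_gt0 B0 B_lt eq_prof.
have Bd_lt j : j * d < j.+1 * d by rewrite mulSn -{1}(add0n (j * d)) ltn_add2r.
case/(dwm_lang_blocks _ B0 B_lt) => S [SF S_vis]; apply/(dwm_lang_blocks _ (mul0n d) Bd_lt).
by exists S; split=> // q; rewrite S_vis; apply: eq_dvisits.
Qed.

End Deterministic.

Section Nondeterministic.
Variables (SI SO Q : finType) (q0 : Q) (Delta : Q -> SI * SO -> Q -> bool) (F : {set {set Q}}).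

(* [ntrace q l q' V]: some run on [l] leads from [q] to [q'] and visits exactly [V]
   before its last state. *)
Fixpoint ntrace (q : Q) (l : seq (SI * SO)) (q' : Q) (V : {set Q}) : bool :=
  if l is a :: l' then
    [exists q1, exists V1 : {set Q}, [&& Delta q a q1, ntrace q1 l' q' V1 & V == q |: V1]]
  else (q' == q) && (V == set0).

Definition nprof l : {set Q * Q * {set Q}} := [set x | ntrace x.1.1 l x.1.2 x.2].

Definition ncomb (R1 R2 : {set Q * Q * {set Q}}) : {set Q * Q * {set Q}} :=
  [set x | [exists q1, exists V1, exists V2,
     [&& (x.1.1, q1, V1) \in R1, (q1, x.1.2, V2) \in R2 & x.2 == V1 :|: V2]]].

Lemma ntrace_catP q l1 l2 q' V : ntrace q (l1 ++ l2) q' V <->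
  exists q1 V1 V2, [/\ ntrace q l1 q1 V1, ntrace q1 l2 q' V2 & V = V1 :|: V2].
Proof.
elim: l1 q V => [|a l1 IH] q V /=.
  split=> [tr|[q1 [V1 [V2 [/andP[/eqP -> /eqP ->] tr ->]]]]]; last by rewrite set0U.
  by exists q, set0, V; rewrite !eqxx set0U.
split.
  case/existsP => q2 /existsP[V' /and3P[tr_a /IH[q1 [V1 [V2 [tr1 tr2 ->]]]] /eqP ->]].
  exists q1, (q |: V1), V2; split=> //; last by rewrite setUA.
  by apply/existsP; exists q2; apply/existsP; exists V1; rewrite tr_a tr1 eqxx.
case=> q1 [V1 [V2 [/existsP[q2 /existsP[V1' /and3P[tr_a tr1 /eqP ->]]] tr2 ->]]].
apply/existsP; exists q2; apply/existsP; exists (V1' :|: V2).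
by rewrite tr_a -setUA eqxx andbT; apply/IH; exists q1, V1', V2.
Qed.

Lemma nprof_cat l1 l2 : nprof (l1 ++ l2) = ncomb (nprof l1) (nprof l2).
Proof.
apply/setP => -[[q q'] V]; rewrite !inE /=; apply/idP/idP.
  case/ntrace_catP => q1 [V1 [V2 [tr1 tr2 ->]]].
  by apply/existsP; exists q1; apply/existsP; exists V1; apply/existsP; exists V2;
    rewrite !inE tr1 tr2 eqxx.
case/existsP => q1 /existsP[V1 /existsP[V2]]; rewrite !inE /= => /and3P[tr1 tr2 /eqP ->].
by apply/ntrace_catP; exists q1, V1, V2.
Qed.

Lemma ntrace_run (c : nat -> SI * SO) (rho : nat -> Q) s e : s <= e ->
  (forall i, s <= i < e -> Delta (rho i) (c i) (rho i.+1)) ->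
  ntrace (rho s) (segment c s e) (rho e) [set x in segment rho s e].
Proof.
move/subnK <-; move: (e - s) => n; elim: n s => [|n IH] s rho_step.
  by rewrite add0n /segment subnn /= eqxx; apply/eqP/setP => x; rewrite !inE.
have lt_s : s < n.+1 + s by rewrite addSn ltnS leq_addl.
rewrite (segment_cons c lt_s) (segment_cons rho lt_s) addSnnS /=.
apply/existsP; exists (rho s.+1); apply/existsP; exists [set x in segment rho s.+1 (n + s.+1)].
rewrite rho_step ?leqnn // IH ?set_cons ?eqxx // => i /andP[lt_si lt_i].
by apply: rho_step; rewrite ltnW //= addSnnS.
Qed.

Lemma ntrace_runP x0 l q q' V : ntrace q l q' V -> exists rho : nat -> Q,
  [/\ rho 0 = q, rho (size l) = q',
      forall i, i < size l -> Delta (rho i) (nth x0 l i) (rho i.+1) &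
      V = [set x in mkseq rho (size l)]].
Proof.
elim: l q V => [|a l IH] q V /=.
  by case/andP => /eqP -> /eqP ->; exists (fun=> q); split=> //; apply/setP => x; rewrite !inE.
case/existsP => q1 /existsP[V1 /and3P[tr_a /IH[rho [rho0 rho_l rho_step ->]] /eqP ->]].
exists (fun i => if i is i'.+1 then rho i' else q); split => //.
- by case=> [|i] lt_i /=; [rewrite rho0 | apply: rho_step].
- by rewrite mkseq_cons set_cons.
Qed.

Lemma ntrace_transfer (a b : nat -> SI * SO) (r : nat -> Q) s e s' e' : s <= e ->
  (forall i, s <= i < e -> Delta (r i) (a i) (r i.+1)) ->
  nprof (segment a s e) = nprof (segment b s' e') ->
  exists rho : nat -> Q,
    [/\ rho 0 = r s, rho (e' - s') = r e,
        forall i, i < e' - s' -> Delta (rho i) (b (s' + i)) (rho i.+1) &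
        [set x in segment r s e] = [set x in mkseq rho (e' - s')]].
Proof.
move=> le_se r_step eq_prof.
have : (r s, r e, [set x in segment r s e]) \in nprof (segment a s e) by rewrite inE ntrace_run.
rewrite eq_prof inE => /(ntrace_runP (b 0))[rho []]; rewrite size_segment.
move=> rho0 rho_e rho_step V_rho; exists rho; split=> // i lt_i.
by have := rho_step i lt_i; rewrite nth_mkseq.
Qed.

Lemma nwm_block_closed : block_closed nprof (nwm_lang q0 Delta F).
Proof.
move=> a b B d d_gt0 B0 B_lt eq_prof [r [r0 [r_step [S [SF S_occ]]]]].
pose V j := [set x in segment r (B j) (B j.+1)].
have block_run j : exists rho : nat -> Q,
    [/\ rho 0 = r (B j), rho d = r (B j.+1),
        forall i, i < d -> Delta (rho i) (b (j * d + i)) (rho i.+1) &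
        V j = [set x in mkseq rho d]].
  by have := ntrace_transfer (ltnW (B_lt j)) (fun i _ => r_step i) (eq_prof j); rewrite mulSn addnK.
have [rho rho_spec] := functional_choice _ block_run.
pose r' n := rho (n %/ d) (n %% d).
have r'_lt j i : i < d -> r' (j * d + i) = rho j i.
  by move=> lt_id; rewrite /r' divnMDl // divn_small // addn0 modnMDl modn_small.
have r'E j i : i <= d -> r' (j * d + i) = rho j i.
  rewrite leq_eqVlt => /orP[/eqP ->|]; last exact: r'_lt.
  have [_ -> _ _] := rho_spec j; have [<- _ _ _] := rho_spec j.+1.
  by rewrite -(r'_lt _ _ d_gt0) addn0 mulSn addnC.
exists r'; split; [|split].
- by rewrite -(add0n 0) -{1}(mul0n d) r'_lt //; have [-> _ _ _] := rho_spec 0; rewrite B0.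
- move=> n; rewrite (divn_eq n d); move: (n %/ d) (n %% d) (ltn_pmod n d_gt0) => j i lt_id.
  rewrite -addnS (r'E j i.+1 lt_id) (r'E j i (ltnW lt_id)).
  by have [_ _ rho_step _] := rho_spec j; apply: rho_step.
exists S; split=> // q; rewrite S_occ; split=> [[n <-]|[n <-]].
  have [j /andP[le_n lt_n]] := block_cover B0 B_lt n.
  have : r n \in V j by rewrite inE; apply/mem_segmentP; exists n; rewrite ?le_n.
  have [_ _ _ ->] := rho_spec j; rewrite inE => /mem_mkseqP[i lt_id <-].
  by exists (j * d + i); rewrite r'_lt.
have : r' n \in V (n %/ d).
  by have [_ _ _ ->] := rho_spec (n %/ d); rewrite inE; apply/mem_mkseqP; exists (n %% d);
    rewrite ?ltn_pmod.
by rewrite inE => /mem_segmentP[m _ <-]; exists m.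
Qed.

End Nondeterministic.

Lemma polyn_132 k : polyn [:: 1; 3; 2] k = 1 + 3 * k + 2 * k ^ 2.
Proof. by rewrite /polyn /= !big_ord_recr big_ord0 /= expn0 expn1 muln1. Qed.

Lemma card_dprof_lt (Q : finType) :
  #|{ffun Q -> Q * {set Q}}| < 2 ^ polyn [:: 1; 3; 2] #|Q|.
Proof.
rewrite card_ffun card_prod card_finset polyn_132; move: #|Q| => k.
apply: (@leq_ltn_trans ((2 ^ k * 2 ^ k) ^ k)).
  case: k => // k; rewrite leq_exp2r // leq_mul2r.
  by rewrite (ltnW (ltn_expl k.+1 (ltnSn 1))) orbT.
by rewrite -expnD -expnM ltn_exp2l //; nia.
Qed.

Lemma card_nprof_lt (Q : finType) :
  #|{set Q * Q * {set Q}}| < 2 ^ 2 ^ polyn [:: 1; 3; 2] #|Q|.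
Proof.
rewrite card_finset !card_prod card_finset ltn_exp2l // polyn_132; move: #|Q| => k.
have le_k : k <= 2 ^ k := ltnW (ltn_expl k (ltnSn 1)).
apply: (@leq_ltn_trans (2 ^ k * 2 ^ k * 2 ^ k)); first by rewrite !leq_mul.
by rewrite -!expnD ltn_exp2l //; lia.
Qed.

Theorem theorem2 :
  exists cs : seq nat,
    (forall (SI SO Q : finType) (q0 : Q) (delta : Q -> SI * SO -> Q)
            (F : {set {set Q}}),
       (exists g, is_delay g /\ winsO g (dwm_lang q0 delta F)) <->
       (exists f, is_const_delay f /\ f 0 <= 2 ^ (2 ^ polyn cs #|Q|)
                  /\ winsO f (dwm_lang q0 delta F)))
    /\
    (forall (SI SO Q : finType) (q0 : Q) (Delta : Q -> SI * SO -> Q -> bool)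
            (F : {set {set Q}}),
       (exists g, is_delay g /\ winsO g (nwm_lang q0 Delta F)) <->
       (exists f, is_const_delay f /\ f 0 <= 2 ^ (2 ^ (2 ^ polyn cs #|Q|))
                  /\ winsO f (nwm_lang q0 Delta F))).
Proof.
exists [:: 1; 3; 2]; split=> SI SO Q q0 delta F; split;
  try by case=> f [[f_delay _] [_ wins]]; exists f.
- move/(winsO_const_delay (@dprof_cat _ _ _ delta) (@dwm_block_closed _ _ _ q0 delta F)) => wins.
  exists (const_delay (2 ^ #|{ffun Q -> Q * {set Q}}|.+1)).
  split; last split=> //; first by apply: const_delayP; rewrite expn_gt0.
  by rewrite /= leq_exp2l // card_dprof_lt.
- move/(winsO_const_delay (@nprof_cat _ _ _ delta) (@nwm_block_closed _ _ _ q0 delta F)) => wins.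
  exists (const_delay (2 ^ #|{set Q * Q * {set Q}}|.+1)).
  split; last split=> //; first by apply: const_delayP; rewrite expn_gt0.
  by rewrite /= leq_exp2l // card_nprof_lt.
Qed.
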